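(* Let $\mathbf{a}=(a_1,\dots,a_n)\in\mathbb{Z}_{\ge0}^n$ with $\mathbf{a}\ne\mathbf{0}$ and $a_1\ge\dots\ge a_n$, let $0<\beta<1$, $\epsilon>0$ and $c_2>0$ with $0<c_2\epsilon<1$, and suppose $1-\beta\ge\dfrac{c_2\epsilon}{n\|\mathbf{a}\|_1}$. If a real number $Z$ satisfies $$\mathrm{Vol}(Q_0\cap Q_1)\le Z\le\Big(1+\frac{c_2\epsilon^2}{2n}\Big)\mathrm{Vol}(Q_0\cap Q_1),$$ then $$(1-\epsilon)\Big(\frac{2^n}{n!}-\mathrm{Vol}(Q_1\cap Q_0)\Big)\le \frac{2^n}{n!}-Z\le \frac{2^n}{n!}-\mathrm{Vol}(Q_1\cap Q_0).$$
   Context: For $\mathbf{c}\in\mathbb{R}^n$, $r\ge 0$, $C(\mathbf{c},r)=\{\mathbf{x}\in\mathbb{R}^n:\|\mathbf{x}-\mathbf{c}\|_1\le r\}$. For $k=0,1,2,\dots$, $Q_k=C((1-\beta^k)\mathbf{a},\beta^k)$. *)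

From Stdlib Require Import Reals Lra Lia List ZArith.
Import ListNotations.
Open Scope R_scope.

(* Points of R^n are represented as functions nat -> R; only the
   coordinates 0..n-1 are relevant. *)
Definition pt := nat -> R.

Fixpoint rsum (n : nat) (f : nat -> R) : R :=
  match n with
  | O => 0
  | S m => rsum m f + f m
  end.

Definition l1norm (n : nat) (x : pt) : R := rsum n (fun i => Rabs (x i)).

Definition C (n : nat) (c : pt) (r : R) : pt -> Prop :=
  fun x => l1norm n (fun i => x i - c i) <= r.

Definition Q (n : nat) (a : nat -> nat) (beta : R) (k : nat) : pt -> Prop :=
  C n (fun i => (1 - beta ^ k) * INR (a i)) (beta ^ k).

Definition dcube (n k : nat) (z : list Z) : pt -> Prop :=
  fun x => forall i, (i < n)%nat ->
    IZR (nth i z 0%Z) / 2 ^ k <= x i <= (IZR (nth i z 0%Z) + 1) / 2 ^ k.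

Definition inner_vals (n : nat) (S : pt -> Prop) (v : R) : Prop :=
  exists (k : nat) (F : list (list Z)),
    NoDup F /\
    (forall z, In z F -> length z = n /\ forall x, dcube n k z x -> S x) /\
    v = INR (length F) / 2 ^ (k * n).

(* V is the (Jordan = Lebesgue, for the compact convex sets considered here)
   volume of S: the supremum of the inner dyadic approximations. *)
Definition is_volume (n : nat) (S : pt -> Prop) (V : R) : Prop :=
  is_lub (inner_vals n S) V.

(* Since V <= Z, the right inequality is immediate and the left one reduces to
   V (1 + c2 eps / (2n)) <= 2^n / n!, the volume of the unit l1 ball.  Slice Q0 ∩ Q1
   perpendicularly to the first axis: left of the point p where the rising flank of the
   tent of Q1 crosses the falling flank of the tent of Q0, a slice lies in an
   (n-1)-dimensional l1 ball of radius given by the first tent, right of p by the second.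
   Integrating the slice volumes gives Vol(Q0 ∩ Q1) <= (2^n / n!) q^n, where
   q = 1 - (1 - beta)(1 + a_1)/2 is the common height of the tents at p.  The gap
   hypothesis gives q <= 1 - x with x = c2 eps / (2n^2), and (1 - x)^n (1 + n x) <= 1 by
   Bernoulli's inequality.  Volumes being suprema of dyadic inner approximations, the
   integration is carried out on cube counts, column by column along the first axis, and
   the volume of the lower-dimensional balls is bounded the same way by induction. *)

From Pilot Require Import Defs.
From Stdlib Require Import Reals Lra Lia List ZArith.
Open Scope R_scope.

Lemma rsum_nonneg (n : nat) (f : nat -> R) : (forall i, 0 <= f i) -> 0 <= rsum n f.
Proof. intros Hf. induction n as [|n IH]; simpl; [lra | specialize (Hf n); lra]. Qed.

Lemma rsum_le_const (n : nat) (f : nat -> R) (M : R) :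
  (forall i, (i < n)%nat -> f i <= M) -> rsum n f <= INR n * M.
Proof.
  induction n as [|n IH]; intros Hf; [simpl; lra|].
  rewrite S_INR. simpl.
  assert (f n <= M) by (apply Hf; lia).
  assert (rsum n f <= INR n * M) by (apply IH; intros; apply Hf; lia).
  lra.
Qed.

Lemma rsum_ge_term (n : nat) (f : nat -> R) (i : nat) :
  (forall j, 0 <= f j) -> (i < n)%nat -> f i <= rsum n f.
Proof.
  induction n as [|n IH]; intros Hf Hi; simpl; [lia|].
  destruct (Nat.eq_dec i n) as [->|Hne].
  - pose proof (rsum_nonneg n f Hf). lra.
  - assert (f i <= rsum n f) by (apply IH; auto; lia). specialize (Hf n). lra.
Qed.

Lemma rsum_S_l (n : nat) (f : nat -> R) : rsum (S n) f = f 0%nat + rsum n (fun i => f (S i)).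
Proof.
  induction n as [|n IH]; [simpl; lra|].
  change (rsum (S (S n)) f) with (rsum (S n) f + f (S n)). rewrite IH. simpl. lra.
Qed.

Lemma l1norm_nonneg (n : nat) (x : pt) : 0 <= l1norm n x.
Proof. apply rsum_nonneg. intros; apply Rabs_pos. Qed.

Lemma l1norm_S (n : nat) (x : pt) : l1norm (S n) x = Rabs (x 0%nat) + l1norm n (fun i => x (S i)).
Proof. apply rsum_S_l. Qed.

Lemma pow_sub_pow_ge (m : nat) (X Y rho : R) : 0 <= rho <= Y -> Y <= X ->
  (X - Y) * INR (S m) * rho ^ m <= X ^ S m - Y ^ S m.
Proof.
  intros Hrho HYX. induction m as [|m IH]; [simpl; lra|].
  (* X^(m+2) - Y^(m+2) = X (X^(m+1) - Y^(m+1)) + Y^(m+1) (X - Y), and X, Y >= rho. *)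
  assert (HXrho : rho * ((X - Y) * INR (S m) * rho ^ m) <= X * (X ^ S m - Y ^ S m)).
  { apply Rmult_le_compat; try lra.
    repeat apply Rmult_le_pos; try lra; [apply pos_INR | apply pow_le; lra]. }
  assert (Hrho1 : rho ^ S m <= Y ^ S m) by (apply pow_incr; lra).
  assert (HXY : (X - Y) * rho ^ S m <= (X - Y) * Y ^ S m) by (apply Rmult_le_compat_l; lra).
  rewrite S_INR. simpl in *. nra.
Qed.

Lemma one_sub_pow_mul_le (n : nat) (x : R) : 0 < x <= 1 -> (1 - x) ^ n * (1 + INR n * x) <= 1.
Proof.
  intros Hx.
  apply Rle_trans with ((1 - x) ^ n * (1 + x) ^ n).
  - apply Rmult_le_compat_l; [apply pow_le; lra | apply poly; lra].
  - rewrite <- Rpow_mult_distr, <- (pow1 n). apply pow_incr. rewrite pow1. nra.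
Qed.

Definition posp (m : nat) (u : R) : R := if Rle_dec 0 u then u ^ m else 0.

Lemma posp_nonneg (m : nat) (u : R) : 0 <= posp m u.
Proof. unfold posp. destruct (Rle_dec 0 u); [apply pow_le; lra | lra]. Qed.

Lemma posp_pos_eq (m : nat) (u : R) : 0 <= u -> posp m u = u ^ m.
Proof. intros Hu. unfold posp. destruct (Rle_dec 0 u); [reflexivity | lra]. Qed.

Lemma posp_le_compat (m : nat) (u v : R) : u <= v -> posp m u <= posp m v.
Proof.
  intros Huv. unfold posp.
  destruct (Rle_dec 0 u), (Rle_dec 0 v); try lra.
  - apply pow_incr. lra.
  - apply pow_le. lra.
Qed.

Lemma posp_le_pow (m : nat) (u v : R) : u <= v -> 0 <= v -> posp m u <= v ^ m.
Proof. intros Huv Hv. rewrite <- (posp_pos_eq m v Hv). now apply posp_le_compat. Qed.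

(* The primitive of y |-> (m+1) posp m (r - |y - c|) vanishing at -oo: up to the factor
   2^m / (m+1)!, the volume of the part of an l1 ball of R^(m+1) below the height y. *)
Definition tent_prim (m : nat) (c r y : R) : R :=
  if Rle_dec y c then posp (S m) (r - (c - y))
  else 2 * r ^ S m - posp (S m) (r - (y - c)).

Lemma tent_prim_bounds (m : nat) (c r y : R) :
  0 <= r -> 0 <= tent_prim m c r y <= 2 * r ^ S m.
Proof.
  intros Hr. unfold tent_prim.
  pose proof (pow_le r (S m) Hr).
  destruct (Rle_dec y c).
  - pose proof (posp_nonneg (S m) (r - (c - y))).
    pose proof (posp_le_pow (S m) (r - (c - y)) r ltac:(lra) Hr). lra.
  - pose proof (posp_nonneg (S m) (r - (y - c))).
    pose proof (posp_le_pow (S m) (r - (y - c)) r ltac:(lra) Hr). lra.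
Qed.

Lemma tent_prim_le_compat (m : nat) (c r y y' : R) :
  0 <= r -> y <= y' -> tent_prim m c r y <= tent_prim m c r y'.
Proof.
  intros Hr Hy. unfold tent_prim.
  destruct (Rle_dec y' c), (Rle_dec y c); try lra.
  - apply posp_le_compat. lra.
  - pose proof (posp_le_pow (S m) (r - (c - y)) r ltac:(lra) Hr).
    pose proof (posp_le_pow (S m) (r - (y' - c)) r ltac:(lra) Hr). lra.
  - pose proof (posp_le_compat (S m) (r - (y' - c)) (r - (y - c)) ltac:(lra)). lra.
Qed.

Lemma tent_prim_increment (m : nat) (c r a b rho : R) :
  0 <= r -> a <= b -> rho <= r - Rabs (a - c) -> rho <= r - Rabs (b - c) ->
  (b - a) * INR (S m) * posp m rho <= tent_prim m c r b - tent_prim m c r a.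
Proof.
  intros Hr Hab Ha Hb.
  destruct (Rle_dec 0 rho) as [Hrho|Hrho].
  2:{ unfold posp. destruct (Rle_dec 0 rho); [lra|].
      pose proof (tent_prim_le_compat m c r a b Hr Hab). lra. }
  rewrite posp_pos_eq by lra. unfold tent_prim.
  destruct (Rle_dec b c), (Rle_dec a c); try lra.
  - rewrite Rabs_minus_sym, Rabs_pos_eq in Ha, Hb by lra.
    rewrite !posp_pos_eq by lra.
    replace (b - a) with ((r - (c - b)) - (r - (c - a))) by ring.
    apply pow_sub_pow_ge; lra.
  - rewrite Rabs_minus_sym, Rabs_pos_eq in Ha by lra. rewrite Rabs_pos_eq in Hb by lra.
    rewrite !posp_pos_eq by lra.
    pose proof (pow_sub_pow_ge m r (r - (c - a)) rho ltac:(lra) ltac:(lra)).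
    pose proof (pow_sub_pow_ge m r (r - (b - c)) rho ltac:(lra) ltac:(lra)).
    replace ((b - a) * INR (S m) * rho ^ m) with
      ((r - (r - (c - a))) * INR (S m) * rho ^ m + (r - (r - (b - c))) * INR (S m) * rho ^ m)
      by ring.
    lra.
  - rewrite Rabs_pos_eq in Ha, Hb by lra.
    rewrite !posp_pos_eq by lra.
    replace (b - a) with ((r - (a - c)) - (r - (b - c))) by ring.
    pose proof (pow_sub_pow_ge m (r - (a - c)) (r - (b - c)) rho ltac:(lra) ltac:(lra)).
    lra.
Qed.

Lemma Rabs_sub_le_between (a p b c M : R) :
  a <= p <= b -> Rabs (a - c) <= M -> Rabs (b - c) <= M -> Rabs (p - c) <= M.
Proof.
  intros Hp Ha Hb. unfold Rabs in *.
  destruct (Rcase_abs (a - c)), (Rcase_abs (b - c)), (Rcase_abs (p - c)); lra.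
Qed.

(* Integrates the tent of the first ball left of p and that of the second ball right of p;
   on each side this dominates the slice profile of the intersection of the two balls. *)
Definition split_prim (m : nat) (cL rL cR rR p y : R) : R :=
  if Rle_dec y p then tent_prim m cL rL y
  else tent_prim m cR rR y - tent_prim m cR rR p + tent_prim m cL rL p.

Lemma split_prim_bounds (m : nat) (cL rL cR rR p y : R) : 0 <= rL -> 0 <= rR ->
  0 <= split_prim m cL rL cR rR p y <= 2 * rR ^ S m - tent_prim m cR rR p + tent_prim m cL rL p.
Proof.
  intros HL HR. unfold split_prim. destruct (Rle_dec y p).
  - pose proof (tent_prim_bounds m cL rL y HL). pose proof (tent_prim_le_compat m cL rL y p HL r).
    pose proof (tent_prim_bounds m cR rR p HR). lra.
  - pose proof (tent_prim_bounds m cR rR y HR).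
    pose proof (tent_prim_le_compat m cR rR p y HR ltac:(lra)).
    pose proof (tent_prim_bounds m cL rL p HL). lra.
Qed.

Lemma split_prim_increment (m : nat) (cL rL cR rR p a b rho : R) :
  0 <= rL -> 0 <= rR -> a <= b ->
  rho <= rL - Rabs (a - cL) -> rho <= rL - Rabs (b - cL) ->
  rho <= rR - Rabs (a - cR) -> rho <= rR - Rabs (b - cR) ->
  (b - a) * INR (S m) * posp m rho <= split_prim m cL rL cR rR p b - split_prim m cL rL cR rR p a.
Proof.
  intros HL HR Hab HaL HbL HaR HbR. unfold split_prim.
  destruct (Rle_dec b p), (Rle_dec a p); try lra.
  - now apply tent_prim_increment.
  - pose proof (Rabs_sub_le_between a p b cL (rL - rho) ltac:(lra) ltac:(lra) ltac:(lra)).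
    pose proof (Rabs_sub_le_between a p b cR (rR - rho) ltac:(lra) ltac:(lra) ltac:(lra)).
    pose proof (tent_prim_increment m cL rL a p rho HL ltac:(lra) HaL ltac:(lra)).
    pose proof (tent_prim_increment m cR rR p b rho HR ltac:(lra) ltac:(lra) HbR).
    replace ((b - a) * INR (S m) * posp m rho) with
      ((p - a) * INR (S m) * posp m rho + (b - p) * INR (S m) * posp m rho) by ring.
    lra.
  - pose proof (tent_prim_increment m cR rR a b rho HR Hab HaR HbR). lra.
Qed.

(* Defs.C is qualified throughout: Reals also exports the binomial coefficient C. *)
Definition cubes_within (m k : nat) (F : list (list Z)) (S : pt -> Prop) : Prop :=
  forall z, In z F -> length z = m /\ forall x, dcube m k z x -> S x.

Lemma heads_bounded (F : list (list Z)) :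
  exists lo N, forall z, In z F -> (lo <= hd 0%Z z < lo + Z.of_nat N)%Z.
Proof.
  induction F as [|z F [lo [N IH]]].
  - exists 0%Z, 0%nat. intros z [].
  - exists (Z.min lo (hd 0%Z z)),
      (Z.to_nat (Z.max (lo + Z.of_nat N) (hd 0%Z z + 1) - Z.min lo (hd 0%Z z))).
    intros w [<-|Hw]; [|specialize (IH w Hw)]; rewrite Z2Nat.id; lia.
Qed.

Lemma length_le_telescope (D : R) (g : Z -> R) (N : nat) :
  forall (F : list (list Z)) lo,
  NoDup F -> (forall z, In z F -> (lo <= hd 0%Z z < lo + Z.of_nat N)%Z) ->
  (forall t G, NoDup G -> (forall z, In z G -> In z F /\ hd 0%Z z = t) ->
     INR (length G) / D <= g (t + 1)%Z - g t) ->
  INR (length F) / D <= g (lo + Z.of_nat N)%Z - g lo.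
Proof.
  induction N as [|N IH]; intros F lo HF Hrange Hcol.
  - destruct F as [|z F].
    + rewrite Z.add_0_r. simpl. unfold Rdiv. lra.
    + specialize (Hrange z (or_introl eq_refl)). lia.
  - set (p := fun z => Z.eqb (hd 0%Z z) lo).
    rewrite <- (filter_length p F), plus_INR.
    assert (Hfirst : INR (length (filter p F)) / D <= g (lo + 1)%Z - g lo).
    { apply Hcol; [now apply NoDup_filter|].
      intros z Hz. apply filter_In in Hz as [Hz Hp]. split; [exact Hz | now apply Z.eqb_eq]. }
    assert (Hrest : INR (length (filter (fun z => negb (p z)) F)) / D <=
                    g ((lo + 1) + Z.of_nat N)%Z - g (lo + 1)%Z).
    { apply IH; [now apply NoDup_filter| |].
      - intros z Hz. apply filter_In in Hz as [Hz Hp]. specialize (Hrange z Hz).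
        apply Bool.negb_true_iff, Z.eqb_neq in Hp. lia.
      - intros t G HG HGF. apply Hcol; [exact HG|].
        intros z Hz. destruct (HGF z Hz) as [HzF Ht]. apply filter_In in HzF as [HzF _]. auto. }
    replace (lo + Z.of_nat (S N))%Z with ((lo + 1) + Z.of_nat N)%Z by lia.
    unfold Rdiv in *. lra.
Qed.

Lemma dcube_corner (m k : nat) (z : list Z) : dcube m k z (fun i => IZR (nth i z 0%Z) / 2 ^ k).
Proof.
  intros i Hi. assert (0 < / 2 ^ k) by (apply Rinv_0_lt_compat, pow_lt; lra).
  unfold Rdiv. nra.
Qed.

Definition pt_cons (y : R) (x : pt) : pt := fun i => match i with O => y | S j => x j end.

Lemma dcube_cons (m k : nat) (t : Z) (z : list Z) (y : R) (x : pt) :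
  IZR t / 2 ^ k <= y <= (IZR t + 1) / 2 ^ k -> dcube m k z x ->
  dcube (S m) k (t :: z) (pt_cons y x).
Proof. intros Hy Hx [|i] Hi; [exact Hy | apply Hx; lia]. Qed.

Lemma C_tail_of_dcube_cons (m k : nat) (t : Z) (z : list Z) (c : pt) (r : R) :
  (forall x, dcube (S m) k (t :: z) x -> Defs.C (S m) c r x) ->
  forall x, dcube m k z x ->
  Defs.C m (fun i => c (S i))
    (r - Rmax (Rabs (IZR t / 2 ^ k - c 0%nat)) (Rabs ((IZR t + 1) / 2 ^ k - c 0%nat))) x.
Proof.
  intros Hcube x Hx.
  assert (H2k : 0 < / 2 ^ k) by (apply Rinv_0_lt_compat, pow_lt; lra).
  set (a := IZR t / 2 ^ k). set (b := (IZR t + 1) / 2 ^ k).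
  assert (Hab : a <= b) by (unfold a, b, Rdiv; nra).
  pose proof (Hcube (pt_cons a x) (dcube_cons m k t z a x (conj (Rle_refl a) Hab) Hx)) as Ha.
  pose proof (Hcube (pt_cons b x) (dcube_cons m k t z b x (conj Hab (Rle_refl b)) Hx)) as Hb.
  unfold Defs.C in *. rewrite l1norm_S in Ha, Hb. simpl in Ha, Hb.
  enough (Rmax (Rabs (a - c 0%nat)) (Rabs (b - c 0%nat)) <=
          r - l1norm m (fun i => x i - c (S i))) by lra.
  apply Rmax_lub; lra.
Qed.

Section Slicing.

Variable m : nat.

Hypothesis l1ball_count_le_m : forall k F c r, NoDup F -> cubes_within m k F (Defs.C m c r) ->
  INR (length F) / 2 ^ (k * m) <= 2 ^ m * posp m r / INR (fact m).

Lemma column_count_le (k : nat) (t : Z) (G : list (list Z)) (cL cR : pt) (rL rR p : R) :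
  0 <= rL -> 0 <= rR -> NoDup G ->
  cubes_within (S m) k G (fun x => Defs.C (S m) cL rL x /\ Defs.C (S m) cR rR x) ->
  (forall z, In z G -> hd 0%Z z = t) ->
  INR (length G) / 2 ^ (k * S m) <=
  2 ^ m / INR (fact (S m)) *
    (split_prim m (cL 0%nat) rL (cR 0%nat) rR p (IZR (t + 1) / 2 ^ k) -
     split_prim m (cL 0%nat) rL (cR 0%nat) rR p (IZR t / 2 ^ k)).
Proof.
  intros HL HR HG Hin Hhd.
  assert (H2k : 0 < 2 ^ k) by (apply pow_lt; lra).
  set (a := IZR t / 2 ^ k). set (b := (IZR t + 1) / 2 ^ k).
  replace (IZR (t + 1) / 2 ^ k) with b by (unfold b; now rewrite plus_IZR).
  set (rhoL := rL - Rmax (Rabs (a - cL 0%nat)) (Rabs (b - cL 0%nat))).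
  set (rhoR := rR - Rmax (Rabs (a - cR 0%nat)) (Rabs (b - cR 0%nat))).
  set (rho := Rmin rhoL rhoR).
  set (G' := map (@tl Z) G).
  assert (Htails : forall z', In z' G' ->
    exists z, In z G /\ z = t :: z' /\ length z' = m).
  { intros z' Hz'. apply in_map_iff in Hz' as [z [<- Hz]]. exists z.
    specialize (Hhd z Hz). destruct (Hin z Hz) as [Hlen _].
    destruct z as [|t0 z]; simpl in *; [lia|]. subst t0. auto. }
  assert (HG' : NoDup G').
  { apply NoDup_map_NoDup_ForallPairs; [|exact HG].
    intros z1 z2 H1 H2 Heq.
    specialize (Hhd z1 H1) as Ht1. specialize (Hhd z2 H2) as Ht2.
    destruct (Hin z1 H1) as [L1 _], (Hin z2 H2) as [L2 _].
    destruct z1, z2; simpl in *; try lia. congruence. }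
  assert (Hwithin : forall (c : pt) r, (forall z, In z G -> forall x, dcube (S m) k z x ->
      Defs.C (S m) c r x) ->
    cubes_within m k G' (Defs.C m (fun i => c (S i)) (r - Rmax (Rabs (a - c 0%nat)) (Rabs (b - c 0%nat))))).
  { intros c r Hc z' Hz'. destruct (Htails z' Hz') as [z [Hz [-> Hlen]]].
    split; [exact Hlen|]. apply C_tail_of_dcube_cons. now apply Hc. }
  assert (Hcount : INR (length G) / 2 ^ (k * m) <= 2 ^ m * posp m rho / INR (fact m)).
  { rewrite <- (length_map (@tl Z) G). fold G'.
    unfold rho, Rmin. destruct (Rle_dec rhoL rhoR).
    - apply (l1ball_count_le_m k G' (fun i => cL (S i))); [exact HG'|].
      apply Hwithin. intros z Hz x Hx. apply (Hin z Hz), Hx.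
    - apply (l1ball_count_le_m k G' (fun i => cR (S i))); [exact HG'|].
      apply Hwithin. intros z Hz x Hx. apply (Hin z Hz), Hx. }
  assert (Hincr : (b - a) * INR (S m) * posp m rho <=
    split_prim m (cL 0%nat) rL (cR 0%nat) rR p b - split_prim m (cL 0%nat) rL (cR 0%nat) rR p a).
  { pose proof (Rmin_l rhoL rhoR). pose proof (Rmin_r rhoL rhoR).
    pose proof (Rmax_l (Rabs (a - cL 0%nat)) (Rabs (b - cL 0%nat))).
    pose proof (Rmax_r (Rabs (a - cL 0%nat)) (Rabs (b - cL 0%nat))).
    pose proof (Rmax_l (Rabs (a - cR 0%nat)) (Rabs (b - cR 0%nat))).
    pose proof (Rmax_r (Rabs (a - cR 0%nat)) (Rabs (b - cR 0%nat))).
    apply split_prim_increment; unfold rho, rhoL, rhoR in *; try lra.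
    unfold a, b, Rdiv. apply Rmult_le_compat_r; [apply Rlt_le, Rinv_0_lt_compat|]; lra. }
  assert (Hfact : 0 < INR (fact m)) by apply INR_fact_lt_0.
  assert (HSm : 0 < INR (S m)) by (apply lt_0_INR; lia).
  rewrite Nat.mul_succ_r, pow_add.
  apply Rle_trans with (2 ^ m * posp m rho / INR (fact m) / 2 ^ k).
  { replace (INR (length G) / (2 ^ (k * m) * 2 ^ k)) with (INR (length G) / 2 ^ (k * m) / 2 ^ k)
      by (field; split; [lra | apply pow_nonzero; lra]).
    unfold Rdiv at 2 4. apply Rmult_le_compat_r; [apply Rlt_le, Rinv_0_lt_compat|]; lra. }
  replace (2 ^ m * posp m rho / INR (fact m) / 2 ^ k) with
    (2 ^ m / INR (fact (S m)) * ((b - a) * INR (S m) * posp m rho))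
    by (unfold a, b; rewrite fact_simpl, mult_INR; field; lra).
  apply Rmult_le_compat_l; [apply Rlt_le, Rdiv_lt_0_compat; [apply pow_lt|apply INR_fact_lt_0]; lra|].
  exact Hincr.
Qed.

Lemma two_ball_count_le (k : nat) (F : list (list Z)) (cL cR : pt) (rL rR p : R) :
  0 <= rL -> 0 <= rR -> NoDup F ->
  cubes_within (S m) k F (fun x => Defs.C (S m) cL rL x /\ Defs.C (S m) cR rR x) ->
  INR (length F) / 2 ^ (k * S m) <=
  2 ^ m / INR (fact (S m)) *
    (2 * rR ^ S m - tent_prim m (cR 0%nat) rR p + tent_prim m (cL 0%nat) rL p).
Proof.
  intros HL HR HF Hin.
  set (g := fun t : Z => 2 ^ m / INR (fact (S m)) *
    split_prim m (cL 0%nat) rL (cR 0%nat) rR p (IZR t / 2 ^ k)).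
  destruct (heads_bounded F) as [lo [N Hrange]].
  apply Rle_trans with (g (lo + Z.of_nat N)%Z - g lo).
  - apply length_le_telescope; [exact HF | exact Hrange|].
    intros t G HG HGF. unfold g. rewrite <- Rmult_minus_distr_l.
    apply column_count_le; auto.
    + intros z Hz. apply Hin, HGF, Hz.
    + intros z Hz. apply HGF, Hz.
  - unfold g. rewrite <- Rmult_minus_distr_l.
    apply Rmult_le_compat_l; [apply Rlt_le, Rdiv_lt_0_compat; [apply pow_lt|apply INR_fact_lt_0]; lra|].
    pose proof (split_prim_bounds m (cL 0%nat) rL (cR 0%nat) rR p (IZR (lo + Z.of_nat N) / 2 ^ k) HL HR).
    pose proof (split_prim_bounds m (cL 0%nat) rL (cR 0%nat) rR p (IZR lo / 2 ^ k) HL HR).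
    lra.
Qed.

End Slicing.

Lemma radius_nonneg_of_cubes_within (m k : nat) (F : list (list Z)) (c : pt) (r : R)
  (z : list Z) : In z F -> cubes_within m k F (Defs.C m c r) -> 0 <= r.
Proof.
  intros Hz Hin. destruct (Hin z Hz) as [_ Hcube].
  pose proof (Hcube _ (dcube_corner m k z)) as Hcorner. unfold Defs.C in Hcorner.
  pose proof (l1norm_nonneg m (fun i => IZR (nth i z 0%Z) / 2 ^ k - c i)). lra.
Qed.

Lemma l1ball_count_le (m k : nat) (F : list (list Z)) (c : pt) (r : R) :
  NoDup F -> cubes_within m k F (Defs.C m c r) ->
  INR (length F) / 2 ^ (k * m) <= 2 ^ m * posp m r / INR (fact m).
Proof.
  revert k F c r. induction m as [|m IH]; intros k F c r HF Hin.
  all: destruct F as [|z F'].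
  1, 3: change (INR (length (@nil (list Z)))) with 0; rewrite Rdiv_0_l;
    apply Rmult_le_pos; [apply Rmult_le_pos; [apply pow_le; lra | apply posp_nonneg]
                        | apply Rlt_le, Rinv_0_lt_compat, INR_fact_lt_0].
  all: pose proof (radius_nonneg_of_cubes_within _ k (z :: F') c r z (or_introl eq_refl) Hin)
         as Hr;
    rewrite posp_pos_eq by exact Hr.
  - assert (Hlen : (length (z :: F') <= 1)%nat).
    { change 1%nat with (length (@nil Z :: nil)). apply NoDup_incl_length; [exact HF|].
      intros w Hw. destruct (Hin w Hw) as [Hw0 _]. destruct w; [now left | discriminate]. }
    apply le_INR in Hlen. rewrite Nat.mul_0_r. simpl in *. lra.
  - eapply Rle_trans.
    { apply (two_ball_count_le m IH k _ c c r r 0 Hr Hr HF).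
      intros w Hw. destruct (Hin w Hw) as [Hlen Hcube]. split; [exact Hlen|]. auto. }
    right. simpl (2 ^ S m). field. apply INR_fact_neq_0.
Qed.

Lemma Rabs_le_l1norm (n i : nat) (x : pt) : (i < n)%nat -> Rabs (x i) <= l1norm n x.
Proof. intros Hi. apply (rsum_ge_term n (fun j => Rabs (x j))); [intros; apply Rabs_pos | exact Hi]. Qed.

Lemma l1norm_nonincreasing_le (n : nat) (a : nat -> nat) :
  (forall i j, (i <= j)%nat -> (j < n)%nat -> (a j <= a i)%nat) ->
  l1norm n (fun i => INR (a i)) <= INR n * INR (a 0%nat).
Proof.
  intros Hsorted. apply rsum_le_const. intros i Hi.
  rewrite Rabs_pos_eq by apply pos_INR. apply le_INR, Hsorted; lia.
Qed.

Lemma is_volume_nonneg (n : nat) (S : pt -> Prop) (V : R) : is_volume n S V -> 0 <= V.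
Proof.
  intros [Hub _]. apply Hub. exists 0%nat, nil.
  split; [constructor | split; [intros z [] | simpl; field]].
Qed.

(* p is where the two tents cross; both primitives evaluate there to q^(m+1). *)
Lemma volume_Q0_Q1_le (m : nat) (a : nat -> nat) (beta V : R) :
  0 < beta < 1 -> (1 <= a 0%nat)%nat ->
  is_volume (S m) (fun x => Q (S m) a beta 0 x /\ Q (S m) a beta 1 x) V ->
  V <= 2 ^ S m / INR (fact (S m)) * posp (S m) (1 - (1 - beta) * (1 + INR (a 0%nat)) / 2).
Proof.
  intros Hbeta Ha0 [_ Hlub]. apply Hlub. intros v [k [F [HF [Hin ->]]]].
  assert (Ha0R : 1 <= INR (a 0%nat)) by (apply (le_INR 1); exact Ha0).
  set (a0 := INR (a 0%nat)) in *.
  set (p := (1 - beta) * (1 + a0) / 2).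
  set (q := 1 - p).
  eapply Rle_trans.
  { apply (two_ball_count_le m (l1ball_count_le m) k F
      (fun i => (1 - beta ^ 1) * INR (a i)) (fun i => (1 - beta ^ 0) * INR (a i))
      (beta ^ 1) (beta ^ 0) p); [rewrite pow_1; lra | rewrite pow_O; lra | exact HF |].
    intros z Hz. destruct (Hin z Hz) as [Hlen Hcube]. split; [exact Hlen|].
    intros x Hx. destruct (Hcube x Hx) as [HQ0 HQ1]. split; [exact HQ1 | exact HQ0]. }
  rewrite pow_O, pow_1. fold a0.
  assert (HR : tent_prim m ((1 - 1) * a0) 1 p = 2 - posp (S m) q).
  { unfold tent_prim. destruct (Rle_dec p ((1 - 1) * a0)); [unfold p in *; nra|].
    rewrite pow1. replace (1 - (p - (1 - 1) * a0)) with q by (unfold q; ring). ring. }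
  assert (HL : tent_prim m ((1 - beta) * a0) beta p = posp (S m) q).
  { unfold tent_prim. destruct (Rle_dec p ((1 - beta) * a0)); [|unfold p in *; nra].
    f_equal. unfold q, p. field. }
  rewrite HR, HL, pow1. right. simpl (2 ^ S m). field. apply INR_fact_neq_0.
Qed.

Lemma volume_Q0_Q1_mul_le (m : nat) (a : nat -> nat) (beta x V : R) :
  0 < beta < 1 -> (1 <= a 0%nat)%nat -> 0 < x <= 1 ->
  1 - (1 - beta) * (1 + INR (a 0%nat)) / 2 <= 1 - x ->
  is_volume (S m) (fun x => Q (S m) a beta 0 x /\ Q (S m) a beta 1 x) V ->
  V * (1 + INR (S m) * x) <= 2 ^ S m / INR (fact (S m)).
Proof.
  intros Hbeta Ha0 Hx Hq Hvol.
  pose proof (volume_Q0_Q1_le m a beta V Hbeta Ha0 Hvol) as HVq.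
  pose proof (posp_le_pow (S m) _ _ Hq ltac:(lra)) as Hpow.
  pose proof (one_sub_pow_mul_le (S m) x Hx) as Hshrink.
  pose proof (is_volume_nonneg _ _ _ Hvol).
  assert (0 <= INR (S m) * x) by (apply Rmult_le_pos; [apply pos_INR | lra]).
  assert (HW : 0 < 2 ^ S m / INR (fact (S m)))
    by (apply Rdiv_lt_0_compat; [apply pow_lt; lra | apply INR_fact_lt_0]).
  apply Rle_trans with (2 ^ S m / INR (fact (S m)) * ((1 - x) ^ S m * (1 + INR (S m) * x)));
    [|nra].
  rewrite <- Rmult_assoc. apply Rmult_le_compat_r; [lra|].
  apply (Rle_trans _ _ _ HVq). apply Rmult_le_compat_l; lra.
Qed.

Lemma half_width_le (n a0 nrm beta ce : R) :
  1 <= n -> 1 <= a0 <= nrm -> nrm <= n * a0 -> 0 < beta < 1 -> 0 < ce ->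
  1 - beta >= ce / (n * nrm) ->
  1 - (1 - beta) * (1 + a0) / 2 <= 1 - ce / (2 * n * n).
Proof.
  intros Hn Ha0 Hnrm Hbeta Hce Hgap.
  assert (Hgap' : ce <= (1 - beta) * (n * n * a0)).
  { apply Rge_le in Hgap. unfold Rdiv in Hgap.
    apply (Rmult_le_compat_r (n * nrm)) in Hgap; [|nra].
    rewrite Rmult_assoc, Rinv_l, Rmult_1_r in Hgap by nra. nra. }
  enough (ce / (2 * n * n) <= (1 - beta) * a0 / 2) by nra.
  apply Rmult_le_reg_r with (2 * n * n); [nra|].
  unfold Rdiv. rewrite Rmult_assoc, Rinv_l, Rmult_1_r by nra. nra.
Qed.

Theorem mainTheorem12 (n : nat) (a : nat -> nat) (beta eps c2 Z V : R) :
  (exists i, (i < n)%nat /\ a i <> 0%nat) ->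
  (forall i j, (i <= j)%nat -> (j < n)%nat -> (a j <= a i)%nat) ->
  0 < beta < 1 -> 0 < eps -> 0 < c2 -> 0 < c2 * eps < 1 ->
  1 - beta >= c2 * eps / (INR n * l1norm n (fun i => INR (a i))) ->
  is_volume n (fun x => Q n a beta 0 x /\ Q n a beta 1 x) V ->
  V <= Z <= (1 + c2 * eps ^ 2 / (2 * INR n)) * V ->
  (1 - eps) * (2 ^ n / INR (fact n) - V) <= 2 ^ n / INR (fact n) - Z
  <= 2 ^ n / INR (fact n) - V.
Proof.
  intros [i0 [Hi0 Hai0]] Hsorted Hbeta Heps Hc2 Hc2eps Hgap Hvol [HVZ HZV].
  destruct n as [|m]; [lia|].
  assert (Ha0 : (1 <= a 0%nat)%nat) by (pose proof (Hsorted 0%nat i0 ltac:(lia) Hi0); lia).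
  assert (Hn : 1 <= INR (S m)) by (apply (le_INR 1); lia).
  assert (Hnrm : INR (a 0%nat) <= l1norm (S m) (fun i => INR (a i))).
  { rewrite <- (Rabs_pos_eq (INR (a 0%nat))) by apply pos_INR.
    apply (Rabs_le_l1norm (S m) 0 (fun i => INR (a i))). lia. }
  set (x := c2 * eps / (2 * INR (S m) * INR (S m))).
  assert (Hx : 0 < x <= 1).
  { unfold x. split; [apply Rdiv_lt_0_compat; nra|].
    apply Rmult_le_reg_r with (2 * INR (S m) * INR (S m)); [nra|].
    unfold Rdiv. rewrite Rmult_assoc, Rinv_l, Rmult_1_r by nra. nra. }
  pose proof (volume_Q0_Q1_mul_le m a beta x V Hbeta Ha0 Hx
    (half_width_le _ _ _ beta _ Hn (conj (le_INR 1 _ Ha0) Hnrm)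
       (l1norm_nonincreasing_le (S m) a Hsorted) Hbeta (proj1 Hc2eps) Hgap) Hvol) as HV.
  pose proof (is_volume_nonneg _ _ _ Hvol).
  replace (c2 * eps ^ 2 / (2 * INR (S m))) with (eps * (INR (S m) * x)) in HZV
    by (unfold x; field; lra).
  split; nra.
Qed.
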